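(* Let $(S,K,I)$ be a split graph and let $v_1\ldots v_n$, with $n\geq 2$, be an induced path in the factor graph $\Phi(S)$. If $\sigma_{i,i+1}=1$ for some $i\in[n-1]$, then $i\in\{1,n-1\}$.
   Context: A split graph $(S,K,I)$ is a graph $S$ together with a fixed partition $V(S)=K\dot\cup I$, where $K$ is a clique and $I$ is an independent set. For a vertex $v$ of $S$, $N_v$ denotes its open neighborhood in $S$ and $d_v=|N_v|$; $\eta_{uv}=|N_u\cap N_v|$. The factor graph $\Phi(S)$ is the loopless multigraph with vertex set $I$ in which, for distinct $u,v\in I$, there is one edge joining $u$ and $v$ for each 2-switch of $S$ acting on $u$ and $v$ (a 2-switch replaces edges $ab,cd$ with $ac,bd$ when $ab,cd\in E(S)$ and $ac,bd\notin E(S)$); equivalently, the multiplicity of $uv$ is $\sigma_{uv}=(d_u-\eta_{uv})(d_v-\eta_{uv})$, and $u,v$ are adjacent iff $\sigma_{uv}>0$; $\sigma_{i,i+1}$ denotes $\sigma_{v_iv_{i+1}}$. An induced path in $\Phi(S)$ consists of distinct vertices with consecutive ones adjacent and no other pair adjacent (multiplicities ignored). *)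

From mathcomp Require Import all_boot.
Set Implicit Arguments. Unset Strict Implicit. Unset Printing Implicit Defensive.

Definition simple_graph (T : finType) (e : rel T) : Prop :=
  symmetric e /\ irreflexive e.

Definition split_graph (T : finType) (e : rel T) (K I : {set T}) : Prop :=
  [/\ simple_graph e,
      K :&: I = set0,
      K :|: I = [set: T],
      (forall x y, x \in K -> y \in K -> x != y -> e x y) &
      (forall x y, x \in I -> y \in I -> ~~ e x y)].

Definition nbhd (T : finType) (e : rel T) (v : T) : {set T} := [set w | e v w].
Definition deg (T : finType) (e : rel T) (v : T) : nat := #|nbhd e v|.
Definition eta (T : finType) (e : rel T) (u v : T) : nat :=
  #|nbhd e u :&: nbhd e v|.

(* multiplicity of the edge uv in the factor graph Phi(S) *)
Definition sigma (T : finType) (e : rel T) (u v : T) : nat :=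
  (deg e u - eta e u v) * (deg e v - eta e u v).

Definition phi_adj (T : finType) (e : rel T) (I : {set T}) (u v : T) : bool :=
  [&& u \in I, v \in I, u != v & 0 < sigma e u v].

Definition induced_path (T : finType) (e : rel T) (I : {set T})
    (n : nat) (v : nat -> T) : Prop :=
  [/\ (forall i, 1 <= i <= n -> v i \in I),
      (forall i j, 1 <= i <= n -> 1 <= j <= n -> v i = v j -> i = j),
      (forall i, 1 <= i < n -> phi_adj e I (v i) (v i.+1)) &
      (forall i j, 1 <= i <= n -> 1 <= j <= n -> i.+1 < j ->
          ~~ phi_adj e I (v i) (v j))].

From mathcomp Require Import all_boot.
From mathcomp Require Import zify.
Set Implicit Arguments. Unset Strict Implicit. Unset Printing Implicit Defensive.

(* sigma u v = |N_u \ N_v| * |N_v \ N_u|, so sigma u v = 0 exactly when the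
   neighbourhoods are comparable, and sigma u v = 1 exactly when they differ by
   one vertex a on the side of u and one vertex b on the side of v.  Around a
   middle edge v_i v_(i+1) of an induced path, N_(v_(i-1)) is comparable with
   N_(v_(i+1)) but not with N_(v_i), which forces b in N_(v_(i-1)) and a not in
   it; symmetrically a is in N_(v_(i+2)) and b is not.  Then N_(v_(i-1)) and
   N_(v_(i+2)) are incomparable, contradicting the non-adjacency of v_(i-1) and
   v_(i+2). *)

Section NeighbourhoodSets.

Variable T : finType.

Lemma cross_comparable_sep (A B C : {set T}) (a b : T) :
  A :\: B = [set a] -> B :\: A = [set b] ->
  ~~ (C \subset A) -> ~~ (A \subset C) -> (C \subset B) || (B \subset C) ->
  a \notin C /\ b \in C.
Proof.
move=> AB BA nCA nAC.
have /setDP[_ aNB] : a \in A :\: B by rewrite AB set11.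
have /setDP[bB _] : b \in B :\: A by rewrite BA set11.
case/orP=> [/subsetP CB | /subsetP BC].
- split; first by apply: contra aNB; apply: CB.
  case/subsetPn: nCA => x xC xNA.
  have : x \in B :\: A by rewrite inE xNA CB.
  by rewrite BA => /set1P <-.
- split; last exact: BC.
  case/subsetPn: nAC => x xA xNC.
  have : x \in A :\: B by rewrite inE xA andbT; apply: contra xNC; apply: BC.
  by rewrite AB => /set1P <-.
Qed.

Variable e : rel T.

Lemma sigmaE (x y : T) :
  sigma e x y = #|nbhd e x :\: nbhd e y| * #|nbhd e y :\: nbhd e x|.
Proof.
rewrite /sigma /deg /eta -(cardsID (nbhd e y) (nbhd e x)) addKn.
by rewrite -(cardsID (nbhd e x) (nbhd e y)) setIC addKn.
Qed.

Lemma sigma_gt0 (x y : T) :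
  (0 < sigma e x y) = ~~ (nbhd e x \subset nbhd e y) && ~~ (nbhd e y \subset nbhd e x).
Proof. by rewrite sigmaE muln_gt0 !card_gt0 !setD_eq0. Qed.

Lemma sigma_eq0 (x y : T) :
  (sigma e x y == 0) = (nbhd e x \subset nbhd e y) || (nbhd e y \subset nbhd e x).
Proof. by rewrite eqn0Ngt sigma_gt0 negb_and !negbK. Qed.

Lemma sigma_eq1P (x y : T) : sigma e x y = 1 ->
  exists a b, nbhd e x :\: nbhd e y = [set a] /\ nbhd e y :\: nbhd e x = [set b].
Proof.
rewrite sigmaE => /eqP; rewrite muln_eq1 => /andP[/cards1P[a ->] /cards1P[b ->]].
by exists a, b.
Qed.

Lemma sigma1_no_induced_P4 (x0 x1 x2 x3 : T) :
  sigma e x1 x2 = 1 -> 0 < sigma e x0 x1 -> 0 < sigma e x2 x3 ->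
  sigma e x0 x2 = 0 -> sigma e x1 x3 = 0 -> sigma e x0 x3 != 0.
Proof.
case/sigma_eq1P=> a [b [AB BA]].
rewrite !sigma_gt0 => /andP[n01 n10] /andP[n23 n32] /eqP s02 /eqP s13.
rewrite sigma_eq0 in s02; rewrite sigma_eq0 orbC in s13.
have [aN0 b0] := cross_comparable_sep AB BA n01 n10 s02.
have [bN3 a3] := cross_comparable_sep BA AB n32 n23 s13.
rewrite sigma_eq0 negb_or; apply/andP; split; apply/subsetPn.
- by exists b.
- by exists a.
Qed.

End NeighbourhoodSets.

Section InducedPath.

Variables (T : finType) (e : rel T) (I : {set T}) (n : nat) (v : nat -> T).
Hypothesis path_v : induced_path e I n v.

Lemma induced_path_sigma_gt0 (p : nat) : 1 <= p < n -> 0 < sigma e (v p) (v p.+1).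
Proof. by case: path_v => _ _ adj _ /adj /and4P[]. Qed.

Lemma induced_path_sigma_eq0 (p q : nat) :
  1 <= p <= n -> 1 <= q <= n -> p.+1 < q -> sigma e (v p) (v q) = 0.
Proof.
case: path_v => inI inj _ nadj hp hq pq.
have vpq : v p != v q by apply/eqP => /(inj _ _ hp hq) epq; lia.
move: (nadj _ _ hp hq pq); rewrite /phi_adj !inI // vpq /=.
by rewrite lt0n negbK => /eqP.
Qed.

End InducedPath.

Theorem corollary4p6 (T : finType) (e : rel T) (K I : {set T})
    (n : nat) (v : nat -> T) :
  split_graph e K I ->
  2 <= n ->
  induced_path e I n v ->
  forall i, 1 <= i <= n.-1 ->
    sigma e (v i) (v i.+1) = 1 ->
    i = 1 \/ i = n.-1.
Proof.
move=> _ n2 path_v i hi s1.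
case: (i =P 1) => [|ne1]; first by left.
case: (i =P n.-1) => [|ne2]; first by right.
exfalso; case: i hi s1 ne1 ne2 => [|j] hi s1 ne1 ne2; first by lia.
have gt0 := induced_path_sigma_gt0 path_v.
have eq0 := induced_path_sigma_eq0 path_v.
have := sigma1_no_induced_P4 s1 (gt0 j ltac:(lia)) (gt0 j.+2 ltac:(lia))
  (eq0 j j.+2 ltac:(lia) ltac:(lia) ltac:(lia))
  (eq0 j.+1 j.+3 ltac:(lia) ltac:(lia) ltac:(lia)).
by rewrite eq0 //; lia.
Qed.
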